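(* Let $G$ be a connected finite simple undirected graph with vertex set $V_G$ (with $|V_G|\ge 2$) and maximum degree $d_G$. Let $W:V_G\to\mathbb{R}$ be a potential, let $\psi$ be the ground state of $H_{G,W}$ (chosen with $\psi(x)>0$ for all $x$), and let $\gamma$ be the gap between the smallest and second-smallest eigenvalues of $H_{G,W}$. If $\psi$ is single-peaked, then $$\gamma\ge\frac{1}{2(|W|+d_G)|V_G|^2},\qquad\text{where } |W|=\max_{x\in V_G}W(x)-\min_{x\in V_G}W(x).$$
   Context: For a finite simple undirected graph $G$ with vertex set $V_G$, let $\mathcal{H}_G$ be the complex Hilbert space with orthonormal basis $\{|x\rangle : x\in V_G\}$. The graph Laplacian is $L_G=\sum_{x} d_x |x\rangle\langle x| - \sum_{x\sim y}|x\rangle\langle y|$, where $d_x$ is the degree of $x$ and the second sum runs over ordered pairs of adjacent vertices. For a potential $W:V_G\to\mathbb{R}$, $H_{G,W}=L_G+\sum_{x} W(x)|x\rangle\langle x|$. By the Perron–Frobenius theorem, for connected $G$ the ground state of $H_{G,W}$ is nondegenerate and can be written $\sum_x\psi(x)|x\rangle$ with $\psi(x)>0$ for all $x$. The function $\psi$ has a local maximum at $x$ if $\psi(x)\ge\psi(y)$ for every neighbor $y$ of $x$. The ground state $\psi$ is called single-peaked if the set of local maxima of $\psi$ forms a connected set of vertices in $G$ (i.e. induces a connected subgraph). *)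

From HB Require Import structures.
From mathcomp Require Import all_boot all_order all_algebra.
Set Implicit Arguments. Unset Strict Implicit. Unset Printing Implicit Defensive.
Import Order.TTheory GRing.Theory Num.Theory.
Local Open Scope ring_scope.

Definition simple_graph (n : nat) (e : rel 'I_n) : Prop :=
  symmetric e /\ irreflexive e.

Definition graph_connected (n : nat) (e : rel 'I_n) : Prop :=
  forall x y, connect e x y.

Definition deg (n : nat) (e : rel 'I_n) (x : 'I_n) : nat := #|[set y | e x y]|.

Definition max_deg (n : nat) (e : rel 'I_n) : nat := (\max_(x : 'I_n) deg e x)%N.

Definition laplacian (R : nzRingType) (n : nat) (e : rel 'I_n) : 'M[R]_n :=
  \matrix_(i, j) ((if i == j then (deg e i)%:R else 0) - (if e i j then 1 else 0)).

Definition hamiltonian (R : nzRingType) (n : nat) (e : rel 'I_n) (W : 'I_n -> R)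
  : 'M[R]_n := laplacian R e + diag_mx (\row_i W i).

(* |W| = max_x W(x) - min_x W(x), written as max_{x,y} (W x - W y)
   (the default value 0 is harmless since W x - W x = 0). *)
Definition Wspread (R : realDomainType) (n : nat) (W : 'I_n -> R) : R :=
  \big[Num.max/0]_(x : 'I_n) \big[Num.max/0]_(y : 'I_n) (W x - W y).

Definition local_max (R : realDomainType) (n : nat) (e : rel 'I_n) (psi : 'I_n -> R)
  (x : 'I_n) : bool := [forall y, e x y ==> (psi y <= psi x)].

Definition single_peaked (R : realDomainType) (n : nat) (e : rel 'I_n)
  (psi : 'I_n -> R) : Prop :=
  forall x y, local_max e psi x -> local_max e psi y ->
    connect [rel a b | [&& e a b, local_max e psi a & local_max e psi b]] x y.

(* Write an eigenvector as v = f psi.  The ground-state representation turns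
   the quadratic form of H - lam into the Dirichlet form
   E(f) = sum over ordered edges ab of psi_a psi_b (f_a - f_b)^2, so an
   eigenvector with eigenvalue mu satisfies E(f) = 2 (mu - lam) |v|^2.
   Single-peakedness joins any two vertices x, y by a simple path on which
   psi >= min(psi_x, psi_y): ascend from x and from y to local maxima inside
   that superlevel set and link the two maxima through the connected set of
   local maxima, along which psi is constant.  Cauchy-Schwarz along the path
   bounds (psi_x psi_y)^2 (f_x - f_y)^2 by (psi_x^2 + psi_y^2) n E(f), and
   summing over x, y with Lagrange's identity gives |v|^2 <= n^2 E(f) when v is
   orthogonal to psi.  Hence mu - lam >= 1/(2 n^2), which implies the stated
   bound since |W| + d_G >= 1; with mu = lam it shows lam is simple. *)

From HB Require Import structures.
From mathcomp Require Import all_boot all_order all_algebra.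
From mathcomp Require Import reals.
From mathcomp Require Import ring lra.
Import Order.TTheory GRing.Theory Num.Theory.
Local Open Scope ring_scope.
Set Implicit Arguments. Unset Strict Implicit.

Lemma lagrange_identity (R : comNzRingType) (I : Type) (r : seq I) (a b : I -> R) :
  \sum_(i <- r) \sum_(j <- r) (a i * b j - a j * b i) ^+ 2 =
  2 * ((\sum_(i <- r) a i ^+ 2) * (\sum_(i <- r) b i ^+ 2)
       - (\sum_(i <- r) a i * b i) ^+ 2).
Proof.
rewrite [X in _ - X]expr2 !big_distrlr /= mulrBr mulr_natl mulr2n.
rewrite [X in X + _ - _]exchange_big !mulr_sumr -!big_split -sumrB /=.
apply: eq_bigr => i _; rewrite !mulr_sumr -!big_split -sumrB /=.
by apply: eq_bigr => j _; ring.
Qed.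

Lemma sqr_sum_le (R : realDomainType) (I : Type) (r : seq I) (a : I -> R) :
  (\sum_(i <- r) a i) ^+ 2 <= (size r)%:R * \sum_(i <- r) a i ^+ 2.
Proof.
have := lagrange_identity r a (fun=> 1); rewrite /=.
under [\sum_(i <- r) 1 ^+ 2]eq_bigr do rewrite expr1n.
under [\sum_(i <- r) (a i * 1)]eq_bigr do rewrite mulr1.
rewrite big_const_seq count_predT iter_addr_0 => lagr.
have : 0 <= \sum_(i <- r) \sum_(j <- r) (a i * 1 - a j * 1) ^+ 2.
  by do 2!apply: sumr_ge0 => ? _; rewrite sqr_ge0.
by rewrite lagr pmulr_rge0 // subr_ge0 mulrC.
Qed.

Lemma ler_sum_uniq (R : numDomainType) (I : finType) (r : seq I) (P : pred I)
    (F : I -> R) :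
  uniq r -> {subset r <= P} -> (forall i, P i -> 0 <= F i) ->
  \sum_(i <- r) F i <= \sum_(i | P i) F i.
Proof.
move=> r_uniq rP F_ge0; rewrite big_uniq // (bigID [in r] P) /=.
rewrite [X in _ <= X + _](eq_bigl [in r]) => [|i]; last exact/andb_idl/rP.
by rewrite lerDl sumr_ge0 // => i /andP[/F_ge0].
Qed.

Lemma sum_sqr_gt0 (R : realDomainType) (n : nat) (v : 'rV[R]_n) :
  v != 0 -> 0 < \sum_x v 0 x ^+ 2.
Proof.
move=> v_neq0; rewrite lt_def sumr_ge0 ?andbT => [|x _]; last exact: sqr_ge0.
apply: contra_neq v_neq0 => sum0; apply/rowP => x; rewrite mxE.
by apply/eqP; rewrite -sqrf_eq0 (psumr_eq0P _ sum0) // => y _; exact: sqr_ge0.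
Qed.

Lemma path_zipE (T : Type) (r : rel T) x p :
  path r x p = all [pred s | r s.1 s.2] (zip (x :: p) p).
Proof. by elim: p x => //= y p IHp x; rewrite IHp. Qed.

Lemma telescope_zip (T : Type) (V : zmodType) (f : T -> V) x p :
  f x - f (last x p) = \sum_(s <- zip (x :: p) p) (f s.1 - f s.2).
Proof.
elim: p x => [|y p IHp] x /=; first by rewrite subrr big_nil.
by rewrite big_cons -IHp addrA subrK.
Qed.

Lemma sum_edges_swap (V : nmodType) (T : finType) (e : rel T) (F : T -> T -> V) :
  symmetric e -> \sum_x \sum_(y | e x y) F x y = \sum_x \sum_(y | e x y) F y x.
Proof.
move=> e_sym; rewrite (exchange_big_dep xpredT) //=.
by apply: eq_bigr => x _; apply: eq_bigl => y; rewrite e_sym.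
Qed.

Lemma eigenvectors_orthogonal (R : fieldType) (n : nat) (A : 'M[R]_n)
    (u v : 'rV[R]_n) (lam mu : R) :
  A^T = A -> u *m A = lam *: u -> v *m A = mu *: v -> mu != lam ->
  \sum_x v 0 x * u 0 x = 0.
Proof.
move=> A_sym Au Av mu_neq_lam.
have : (mu - lam) *: (v *m u^T) = 0.
  rewrite scalerBl scalemxAl -Av -mulmxA -[X in v *m (X *m _)]A_sym -trmx_mul.
  by rewrite Au linearZ /= -scalemxAr subrr.
move/eqP; rewrite scalemx_eq0 subr_eq0 (negPf mu_neq_lam) /= => /eqP/matrixP/(_ 0 0).
by rewrite !mxE => vu0; rewrite -[RHS]vu0; apply: eq_bigr => x _; rewrite mxE.
Qed.

Section Hamiltonian.
Variables (R : comNzRingType) (n : nat) (e : rel 'I_n) (W : 'I_n -> R).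

Lemma hamiltonian_tr : symmetric e -> (hamiltonian e W)^T = hamiltonian e W.
Proof.
move=> e_sym; apply/matrixP => i j; rewrite !mxE (e_sym j i) eq_sym.
by case: eqVneq => [->|].
Qed.

Lemma mul_hamiltonian (v : 'rV[R]_n) y :
  (v *m hamiltonian e W) 0 y
  = ((deg e y)%:R + W y) * v 0 y - \sum_(x | e x y) v 0 x.
Proof.
rewrite !mxE; under eq_bigr => x _.
  have -> : v 0 x * (hamiltonian e W) x y =
      (if x == y then ((deg e y)%:R + W y) * v 0 y else 0)
      - (if e x y then v 0 x else 0).
    by rewrite !mxE; case: eqVneq => [->|_]; case: (e _ y);
      rewrite ?mulr1n ?mulr0n; ring.
  over.
by rewrite sumrB -!big_mkcond big_pred1_eq.
Qed.
End Hamiltonian.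

Definition dirichlet_form (R : pzRingType) (n : nat) (e : rel 'I_n)
    (P f : 'I_n -> R) : R :=
  \sum_a \sum_(b | e a b) P a * P b * (f a - f b) ^+ 2.

Lemma ground_state_representation (R : fieldType) (n : nat) (e : rel 'I_n)
    (W : 'I_n -> R) (u v : 'rV[R]_n) (lam : R) :
  symmetric e -> (forall x, u 0 x != 0) -> u *m hamiltonian e W = lam *: u ->
  2 * \sum_y v 0 y * ((v *m hamiltonian e W) 0 y - lam * v 0 y)
  = dirichlet_form e (u 0) (fun x => v 0 x / u 0 x).
Proof.
move=> e_sym u_neq0 Hu; set f := fun x => v 0 x / u 0 x.
have vE x : v 0 x = u 0 x * f x by rewrite /f mulrC divfK.
have u_deg y : \sum_(x | e x y) u 0 x = ((deg e y)%:R + W y - lam) * u 0 y.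
  have := congr1 (fun M : 'rV_n => M 0 y) Hu; rewrite /= mul_hamiltonian mxE => h.
  by rewrite mulrBl -h; ring.
have local y : (v *m hamiltonian e W) 0 y - lam * v 0 y
    = \sum_(x | e x y) u 0 x * (f y - f x).
  rewrite mul_hamiltonian; under [in RHS]eq_bigr do rewrite mulrBr.
  rewrite sumrB -mulr_suml u_deg.
  under [\sum_(x | _) u 0 x * f x]eq_bigr => x _ do rewrite -vE.
  by rewrite (vE y); ring.
pose G a b := u 0 a * u 0 b * f a * (f a - f b).
have sq a b : u 0 a * u 0 b * (f a - f b) ^+ 2 = G a b + G b a by rewrite /G; ring.
rewrite /dirichlet_form.
under [RHS]eq_bigr => a _ do under eq_bigr => b _ do rewrite sq.
under [RHS]eq_bigr => a _ do rewrite big_split.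
rewrite big_split /= -(sum_edges_swap G) // -mulr2n -[RHS]mulr_natl.
congr (_ * _); apply: eq_bigr => y _; rewrite local mulr_sumr.
by apply: eq_big => [x | x _]; [exact: e_sym | rewrite /G (vE y); ring].
Qed.

Section Peaks.
Variables (R : realDomainType) (n : nat) (e : rel 'I_n) (P : 'I_n -> R).
Hypothesis e_sym : symmetric e.

Definition superlevel_edge (m : R) : rel 'I_n :=
  [rel a b | [&& e a b, m <= P a & m <= P b]].

Lemma superlevel_edge_sym m : symmetric (superlevel_edge m).
Proof. by move=> a b; rewrite /superlevel_edge /= e_sym [(m <= P a) && _]andbC. Qed.

Lemma exists_superlevel_local_max m x : m <= P x ->
  exists z, [/\ local_max e P z, m <= P z & connect (superlevel_edge m) x z].
Proof.
move=> mx.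
have [z xz z_max] := arg_maxP P (connect0 (superlevel_edge m) x).
have mz : m <= P z by apply/(le_trans mx)/z_max/connect0.
exists z; split => //; apply/forallP => y; apply/implyP => ezy.
rewrite leNgt; apply/negP => Pzy.
have /z_max : connect (superlevel_edge m) x y.
  apply: connect_trans xz (connect1 _).
  by rewrite /superlevel_edge /= ezy mz (le_trans mz (ltW Pzy)).
by rewrite /= leNgt Pzy.
Qed.

Lemma local_max_edge_eq a b :
  e a b -> local_max e P a -> local_max e P b -> P a = P b.
Proof.
move=> eab /forallP/(_ b)/implyP ma /forallP/(_ a)/implyP mb.
by apply/eqP; rewrite eq_le mb ?ma // e_sym.
Qed.

Lemma superlevel_connect_peaks m a b : m <= P a ->
  connect [rel a b | [&& e a b, local_max e P a & local_max e P b]] a b ->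
  connect (superlevel_edge m) a b.
Proof.
move=> ma /connectP[p]; elim: p a ma => [|c p IHp] a ma /=; first by move=> _ ->.
case/andP => /and3P[eac la lc] pc lastE.
have mc : m <= P c by rewrite -(local_max_edge_eq eac la lc).
apply: connect_trans (connect1 _) (IHp c mc pc lastE).
by rewrite /superlevel_edge /= eac ma.
Qed.

Lemma single_peaked_superlevel_connect x y : single_peaked e P ->
  connect (superlevel_edge (Num.min (P x) (P y))) x y.
Proof.
move=> peaked; set m := Num.min _ _.
have mx : m <= P x by rewrite ge_min lexx.
have my : m <= P y by rewrite ge_min lexx orbT.
have [z1 [z1_max mz1 xz1]] := exists_superlevel_local_max mx.
have [z2 [z2_max _ yz2]] := exists_superlevel_local_max my.
have z12 := superlevel_connect_peaks mz1 (peaked z1 z2 z1_max z2_max).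
apply: connect_trans xz1 (connect_trans z12 _).
by rewrite (sym_connect_sym (@superlevel_edge_sym m)).
Qed.

End Peaks.

Section DirichletBounds.
Variables (R : realFieldType) (n : nat) (e : rel 'I_n) (P : 'I_n -> R).
Hypotheses (e_sym : symmetric e) (P_gt0 : forall x, 0 < P x).

Let P_ge0 x : 0 <= P x. Proof. exact: ltW. Qed.

Lemma dirichlet_form_ge0 f : 0 <= dirichlet_form e P f.
Proof.
rewrite /dirichlet_form; apply: sumr_ge0 => a _; apply: sumr_ge0 => b _.
by rewrite mulr_ge0 ?sqr_ge0 ?mulr_ge0 ?P_ge0.
Qed.

Lemma path_dirichlet_bound f m x p : 0 <= m -> uniq (x :: p) ->
  path (superlevel_edge e P m) x p ->
  m ^+ 2 * (f x - f (last x p)) ^+ 2 <= (size p)%:R * dirichlet_form e P f.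
Proof.
move=> m_ge0 xp_uniq xp_path; set steps := zip (x :: p) p.
have size_steps : size steps = size p by rewrite size_zip; apply/minn_idPr.
have steps_superlevel : {subset steps <= [pred s | superlevel_edge e P m s.1 s.2]}.
  by apply/allP; rewrite -path_zipE.
rewrite telescope_zip -size_steps.
apply: le_trans
  (_ : m ^+ 2 * ((size steps)%:R * \sum_(s <- steps) (f s.1 - f s.2) ^+ 2) <= _).
  by rewrite ler_wpM2l ?sqr_ge0 ?sqr_sum_le.
rewrite mulrCA ler_wpM2l // mulr_sumr /dirichlet_form pair_big_dep /=.
apply: le_trans (_ : \sum_(s <- steps) P s.1 * P s.2 * (f s.1 - f s.2) ^+ 2 <= _).
  rewrite !big_seq; apply: ler_sum => s /steps_superlevel /and3P[_ ms1 ms2].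
  by rewrite ler_wpM2r ?sqr_ge0 // expr2 ler_pM.
apply: ler_sum_uniq => [|s /steps_superlevel /andP[] //|s _]; first exact: zip_uniql.
by rewrite mulr_ge0 ?sqr_ge0 ?mulr_ge0 ?P_ge0.
Qed.

Hypothesis P_peaked : single_peaked e P.

Lemma dirichlet_pair_bound f x y :
  (P x * P y) ^+ 2 * (f x - f y) ^+ 2 <=
  (P x ^+ 2 + P y ^+ 2) * (n%:R * dirichlet_form e P f).
Proof.
set m := Num.min (P x) (P y).
have m_gt0 : 0 < m by rewrite lt_min !P_gt0.
have PxPy : (P x * P y) ^+ 2 <= (P x ^+ 2 + P y ^+ 2) * m ^+ 2.
  rewrite /m exprMn; have [Pxy | /ltW Pyx] := leP (P x) (P y).
    by rewrite mulrC ler_wpM2r ?sqr_ge0 // lerDr sqr_ge0.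
  by rewrite ler_wpM2r ?sqr_ge0 // lerDl sqr_ge0.
have [p xp_path lastE] :=
  connectP (single_peaked_superlevel_connect e_sym x y P_peaked).
move: PxPy; rewrite lastE; case: (shortenP xp_path) => p' p'_path p'_uniq _ PxPy.
have p'_size : (size p' <= n)%N.
  have := max_card (mem (x :: p')).
  by rewrite (card_uniqP p'_uniq) card_ord => /ltnW.
apply: le_trans (ler_wpM2r (sqr_ge0 _) PxPy) _.
rewrite -mulrA ler_wpM2l ?addr_ge0 ?sqr_ge0 //.
apply: le_trans (path_dirichlet_bound f (ltW m_gt0) p'_uniq p'_path) _.
by rewrite ler_wpM2r ?dirichlet_form_ge0 ?ler_nat.
Qed.

Lemma poincare_orthogonal (phi : 'I_n -> R) : \sum_x phi x * P x = 0 ->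
  \sum_x phi x ^+ 2 <= n%:R ^+ 2 * dirichlet_form e P (fun x => phi x / P x).
Proof.
move=> phi_orth; set E := dirichlet_form _ _ _; set S := \sum_x P x ^+ 2.
have [x0 _ | no_vertex] := pickP (@predT 'I_n); last first.
  rewrite big1 ?mulr_ge0 ?sqr_ge0 ?dirichlet_form_ge0 // => x.
  by have := no_vertex x.
have S_gt0 : 0 < S.
  rewrite /S (bigD1 x0) //= ltr_pwDl ?exprn_gt0 ?sumr_ge0 // => i _.
  exact: sqr_ge0.
have lagr := lagrange_identity (index_enum 'I_n) phi P.
rewrite phi_orth expr0n /= subr0 in lagr.
have pair_sum : \sum_x \sum_y (P x ^+ 2 + P y ^+ 2) = 2 * (n%:R * S).
  under eq_bigr do rewrite big_split /=.
  rewrite big_split /= [X in _ + X]exchange_big /= -mulr2n -[LHS]mulr_natl.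
  congr (_ * _); rewrite /S mulr_sumr.
  by apply: eq_bigr => x _; rewrite sumr_const card_ord mulr_natl.
have : 2 * ((\sum_x phi x ^+ 2) * S) <= 2 * (n%:R ^+ 2 * E * S).
  rewrite -lagr; apply: le_trans
    (_ : \sum_x \sum_y (P x ^+ 2 + P y ^+ 2) * (n%:R * E) <= _).
    apply: ler_sum => x _; apply: ler_sum => y _.
    have -> : (phi x * P y - phi y * P x) ^+ 2
        = (P x * P y) ^+ 2 * (phi x / P x - phi y / P y) ^+ 2.
      by field; apply/andP; split; apply: lt0r_neq0.
    exact: dirichlet_pair_bound.
  under eq_bigr do rewrite -mulr_suml.
  by rewrite -mulr_suml pair_sum le_eqVlt; apply/orP; left; apply/eqP; ring.
by rewrite ler_pM2l // ler_pM2r.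
Qed.
End DirichletBounds.

Section GroundState.
Variables (R : realFieldType) (n : nat) (e : rel 'I_n) (W : 'I_n -> R).
Variables (psi : 'rV[R]_n) (lam : R).
Hypotheses (e_sym : symmetric e) (psi_gt0 : forall x, 0 < psi 0 x).
Hypothesis psi_eigen : psi *m hamiltonian e W = lam *: psi.
Hypothesis psi_peaked : single_peaked e (fun x => psi 0 x).

Lemma spectral_gap_orthogonal (v : 'rV[R]_n) mu :
  v *m hamiltonian e W = mu *: v -> v != 0 -> \sum_x v 0 x * psi 0 x = 0 ->
  1 <= 2 * n%:R ^+ 2 * (mu - lam).
Proof.
move=> v_eigen v_neq0 v_orth.
have energy : dirichlet_form e (psi 0) (fun x => v 0 x / psi 0 x)
    = 2 * (mu - lam) * \sum_x v 0 x ^+ 2.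
  rewrite -(@ground_state_representation _ _ _ _ _ v _ e_sym _ psi_eigen);
    last by move=> x; exact: lt0r_neq0.
  rewrite -mulrA; congr (_ * _); rewrite mulr_sumr; apply: eq_bigr => y _.
  by rewrite v_eigen mxE; ring.
have := poincare_orthogonal e_sym psi_gt0 psi_peaked v_orth.
rewrite energy mulrA -[X in X <= _]mul1r ler_pM2r ?sum_sqr_gt0 //.
by rewrite mulrCA mulrA.
Qed.

Lemma rank_eigenspace_ground_state :
  (0 < n)%N -> \rank (eigenspace (hamiltonian e W) lam) = 1%N.
Proof.
move=> n_gt0.
have psi_neq0 : psi != 0.
  by apply/negP => /eqP psi0; have := psi_gt0 (Ordinal n_gt0); rewrite psi0 mxE ltxx.
have psi_rank : \rank psi = 1%N by rewrite rank_rV psi_neq0.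
rewrite -psi_rank; apply/eqmx_rank/andP; split; last first.
  exact/eigenspaceP.
apply/row_subP => i; set v := row i _.
have v_eigen : v *m hamiltonian e W = lam *: v by apply/eigenspaceP; exact: row_sub.
clearbody v.
set c := (\sum_x v 0 x * psi 0 x) / \sum_x psi 0 x ^+ 2.
set w := v - c *: psi.
have w_eigen : w *m hamiltonian e W = lam *: w.
  by rewrite /w mulmxBl v_eigen -scalemxAl psi_eigen !scalerA scalerBr scalerA mulrC.
have w_orth : \sum_x w 0 x * psi 0 x = 0.
  rewrite /w; under eq_bigr => x _ do rewrite !mxE mulrBl -mulrA -expr2.
  by rewrite sumrB -mulr_sumr /c mulfVK ?subrr // lt0r_neq0 ?sum_sqr_gt0.
have w0 : w = 0.
  apply/eqP/contraT => /(spectral_gap_orthogonal w_eigen)/(_ w_orth).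
  by rewrite subrr mulr0 ler10.
by apply/sub_rVP; exists c; apply/eqP; rewrite -subr_eq0 -/w w0.
Qed.

End GroundState.

Lemma max_deg_gt0 (n : nat) (e : rel 'I_n) :
  (2 <= n)%N -> graph_connected e -> (0 < max_deg e)%N.
Proof.
move=> n_ge2 e_conn; pose x0 : 'I_n := Ordinal (ltnW n_ge2).
have /connectP[[|y p] /= x0_path] := e_conn x0 (Ordinal n_ge2).
  by move/(congr1 val).
case/andP: x0_path => x0y _ _; apply: leq_trans (leq_bigmax x0).
by rewrite /deg card_gt0; apply/set0Pn; exists y; rewrite inE.
Qed.

Lemma Wspread_ge0 (R : realDomainType) (n : nat) (W : 'I_n -> R) : 0 <= Wspread W.
Proof.
by apply: (big_rec (fun x => 0 <= x)) => // i x _ x_ge0; rewrite le_max x_ge0 orbT.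
Qed.

Theorem proposition4 (R : realType) (n : nat) (e : rel 'I_n)
  (W : 'I_n -> R) (psi : 'rV[R]_n) (lam1 : R) :
  (2 <= n)%N ->
  simple_graph e ->
  graph_connected e ->
  (forall x, 0 < psi 0 x) ->
  psi *m hamiltonian e W = lam1 *: psi ->
  (forall mu, eigenvalue (hamiltonian e W) mu -> lam1 <= mu) ->
  single_peaked e (fun x => psi 0 x) ->
  \rank (eigenspace (hamiltonian e W) lam1) = 1%N /\
  (forall mu, eigenvalue (hamiltonian e W) mu -> mu != lam1 ->
     (2 * (Wspread W + (max_deg e)%:R) * (n%:R) ^+ 2)^-1 <= mu - lam1).
Proof.
move=> n_ge2 [e_sym _] e_conn psi_gt0 psi_eigen _ psi_peaked.
split; first exact: rank_eigenspace_ground_state (ltnW n_ge2).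
move=> mu /eigenvalueP[v v_eigen v_neq0] mu_neq_lam1.
have v_orth :=
  eigenvectors_orthogonal (hamiltonian_tr W e_sym) psi_eigen v_eigen mu_neq_lam1.
have gap :=
  spectral_gap_orthogonal e_sym psi_gt0 psi_eigen psi_peaked v_eigen v_neq0 v_orth.
have d_ge1 : (1 : R) <= (max_deg e)%:R by rewrite ler1n max_deg_gt0.
have W_ge0 := Wspread_ge0 W.
have n_gt0 : (0 : R) < n%:R by rewrite ltr0n (ltnW n_ge2).
rewrite -[_^-1]mulr1 ler_pdivrMl; last by rewrite !mulr_gt0 ?exprn_gt0 //; lra.
nra.
Qed.
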